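(* Let $n,m\ge1$, $r>0$, and let $\mathbf b_1,\dots,\mathbf b_m\in[0,\infty)^n$ be nonzero vectors with nonnegative entries. Consider the system, in the unknown $\mathbf u\in\mathbb{R}^n$, $$\frac{r}{m}\sum_{j=1}^m\frac{\mathbf b_j}{\mathbf u\cdot\mathbf b_j}-\mathbf u=0 .$$ Then this system has at most one solution $\mathbf u$ with $\mathbf u\cdot\mathbf b_j>0$ for all $j=1,\dots,m$; and if $\mathbf u$ is such a solution, then $\mathbf u\cdot\mathbf u=r$ and $\widehat l(\mathbf u)=\prod_{j=1}^m(\mathbf u\cdot\mathbf b_j)$ equals the global maximum of $\widehat l$ on the sphere $\{\mathbf u\in\mathbb{R}^n:\sum_{i=1}^n u_i^2=r\}$.
   Context: The system is the Lagrange multiplier condition (with the multiplier eliminated) for maximizing $\widehat l(\mathbf u)=\prod_j(\mathbf u\cdot\mathbf b_j)$ on the sphere $\sum_iu_i^2=r$; in the application $b_{ij}=v_i\varphi_i(x_j)$ for nonnegative window functions $\varphi_i$ and observations $x_j$. *)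

From mathcomp Require Import all_boot all_order all_algebra.
Set Implicit Arguments. Unset Strict Implicit. Unset Printing Implicit Defensive.
Import Order.TTheory GRing.Theory Num.Theory.
Local Open Scope ring_scope.

Definition dotv (R : realFieldType) (n : nat) (u v : 'I_n -> R) : R :=
  \sum_(i < n) u i * v i.

Definition lhat (R : realFieldType) (n m : nat) (b : 'I_m -> 'I_n -> R)
  (u : 'I_n -> R) : R := \prod_(j < m) dotv u (b j).

Definition solves_system (R : realFieldType) (n m : nat) (r : R)
  (b : 'I_m -> 'I_n -> R) (u : 'I_n -> R) : Prop :=
  forall i : 'I_n, r / m%:R * (\sum_(j < m) b j i / dotv u (b j)) - u i = 0.

From mathcomp Require Import all_boot all_order all_algebra.
From Stdlib Require Import FunctionalExtensionality.
From mathcomp Require Import ring lra.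
Import Order.TTheory GRing.Theory Num.Theory.
Local Open Scope ring_scope.

(* Dotting the system with any w gives
     w . u = (r/m) * sum_j (w . b_j) / (u . b_j).
   With w = u this is u . u = r.  With w = u - v for two solutions, the right-hand
   side becomes -(r/m) sum_j (u.b_j - v.b_j)^2 / ((u.b_j)(v.b_j)) <= 0, so u = v.
   For maximality, compare |v| with u on the sphere: the ratios
   x_j = (|v|.b_j)/(u.b_j) have mean (|v|.u)/r <= 1 by Cauchy-Schwarz, so by AM-GM
   prod_j x_j <= 1, i.e. lhat v <= lhat |v| <= lhat u. *)

Lemma prod_le_mean_expn {R : numFieldType} {m : nat} (x : 'I_m -> R) :
  (forall j, 0 <= x j) -> \prod_(j < m) x j <= ((\sum_(j < m) x j) / m%:R) ^+ m.
Proof.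
move=> x_ge0; have := leif_AGM (A := 'I_m) (E := x) (fun j _ => x_ge0 j).
by rewrite card_ord => /leifP; case: ifP => [_ /eqP ->|_ /ltW].
Qed.

Section DotProduct.
Context {R : realFieldType} {n : nat}.
Implicit Types u v w : 'I_n -> R.

Lemma dotvC u v : dotv u v = dotv v u.
Proof. by apply: eq_bigr => i _; rewrite mulrC. Qed.

Lemma dotvBl u v w : dotv (fun i => u i - v i) w = dotv u w - dotv v w.
Proof. by rewrite /dotv -sumrB; apply: eq_bigr => i _; rewrite mulrBl. Qed.

Lemma dotvBr u v w : dotv w (fun i => u i - v i) = dotv w u - dotv w v.
Proof. by rewrite dotvC dotvBl !(dotvC w). Qed.

Lemma dotvv_ge0 u : 0 <= dotv u u.
Proof. by apply: sumr_ge0 => i _; rewrite -expr2 sqr_ge0. Qed.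

Lemma dotvv_eq0 {u} : dotv u u = 0 -> forall i, u i = 0.
Proof.
move=> /psumr_eq0P uu0 i; apply/eqP; rewrite -sqrf_eq0 expr2.
by rewrite uu0 // => j _; rewrite -expr2 sqr_ge0.
Qed.

Lemma dotv_le_mean_sqr u v : dotv u v *+ 2 <= dotv u u + dotv v v.
Proof.
have := dotvv_ge0 (fun i => u i - v i).
by rewrite dotvBl !dotvBr (dotvC v u); lra.
Qed.

Lemma lhat_le_lhat_norm {m : nat} {b : 'I_m -> 'I_n -> R} v :
  (forall j i, 0 <= b j i) -> lhat b v <= lhat b (fun i => `|v i|).
Proof.
move=> b_ge0; apply: le_trans (ler_norm _) _; rewrite /lhat normr_prod.
apply: ler_prod => j _; rewrite normr_ge0 /=.
apply: le_trans (ler_norm_sum _ _ _) _.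
by apply: ler_sum => i _; rewrite normrM (ger0_norm (b_ge0 j i)).
Qed.

End DotProduct.

Section Solutions.
Context {R : realFieldType} {n m : nat} {r : R} {b : 'I_m -> 'I_n -> R}.
Hypotheses (m_gt0 : (0 < m)%N) (r_gt0 : 0 < r).

Let m_neq0 : m%:R != 0 :> R. Proof. by rewrite pnatr_eq0 -lt0n. Qed.

Lemma dotv_solution {u : 'I_n -> R} : solves_system r b u -> forall w,
  dotv w u = r / m%:R * \sum_(j < m) dotv w (b j) / dotv u (b j).
Proof.
move=> u_sol w; rewrite /dotv.
under eq_bigr => i _ do rewrite -[u i]addr0 -(u_sol i) addrC subrK.
rewrite mulr_sumr; under eq_bigr do rewrite !mulr_sumr.
rewrite exchange_big; apply: eq_bigr => j _.
by rewrite mulr_suml mulr_sumr; apply: eq_bigr => i _; ring.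
Qed.

Lemma solution_dotvv u : solves_system r b u -> (forall j, 0 < dotv u (b j)) ->
  dotv u u = r.
Proof.
move=> u_sol u_pos; rewrite (dotv_solution u_sol u).
under eq_bigr do rewrite divff ?gt_eqF //.
by rewrite sumr_const card_ord divfK.
Qed.

Lemma solution_unique u v :
  solves_system r b u -> (forall j, 0 < dotv u (b j)) ->
  solves_system r b v -> (forall j, 0 < dotv v (b j)) ->
  u = v.
Proof.
move=> u_sol u_pos v_sol v_pos; pose d i := u i - v i.
have d_b j : dotv d (b j) = dotv u (b j) - dotv v (b j) by rewrite dotvBl.
have dd_le0 : dotv d d <= 0.
  rewrite {2}/d dotvBr (dotv_solution u_sol d) (dotv_solution v_sol d).
  rewrite -mulrBr -sumrB.
  apply: mulr_ge0_le0; first by rewrite divr_ge0 ?ler0n ?ltW.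
  apply: sumr_le0 => j _.
  have := u_pos j; have := v_pos j; rewrite d_b.
  set a := dotv u (b j); set c := dotv v (b j) => c_gt0 a_gt0.
  have -> : (a - c) / a - (a - c) / c = - ((a - c) ^+ 2 / (a * c)).
    by field; rewrite !gt_eqF.
  by rewrite oppr_le0 divr_ge0 ?sqr_ge0 ?mulr_ge0 ?ltW.
have dd0 : dotv d d = 0 by apply/eqP; rewrite eq_le dd_le0 dotvv_ge0.
apply: functional_extensionality => i.
by apply/eqP; rewrite -subr_eq0 -/(d i) (dotvv_eq0 dd0 i).
Qed.

Lemma solution_lhat_max u v : (forall j i, 0 <= b j i) ->
  solves_system r b u -> (forall j, 0 < dotv u (b j)) ->
  \sum_(i < n) v i ^+ 2 = r -> lhat b v <= lhat b u.
Proof.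
move=> b_ge0 u_sol u_pos vv; pose w i : R := `|v i|.
pose x j := dotv w (b j) / dotv u (b j).
have x_ge0 j : 0 <= x j.
  apply: divr_ge0; last exact: ltW.
  by apply: sumr_ge0 => i _; exact: mulr_ge0 (normr_ge0 _) (b_ge0 j i).
have lhat_w : lhat b w = lhat b u * \prod_(j < m) x j.
  rewrite /lhat -big_split; apply: eq_bigr => j _ /=.
  by rewrite mulrCA divff ?mulr1 // gt_eqF.
have ww : dotv w w = r.
  by rewrite -vv; apply: eq_bigr => i _; rewrite -normrM -expr2 ger0_norm ?sqr_ge0.
have wu_le : dotv w u <= r.
  by have := dotv_le_mean_sqr w u; rewrite ww solution_dotvv //; lra.
have mean_x_le1 : (\sum_(j < m) x j) / m%:R <= 1.
  rewrite -(ler_pM2l r_gt0) mulr1 (le_trans _ wu_le) //.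
  by rewrite (dotv_solution u_sol w) mulrCA mulrC.
apply: le_trans (lhat_le_lhat_norm v b_ge0) _; rewrite lhat_w ler_piMr //.
  by apply: prodr_ge0 => j _; exact: ltW.
apply: le_trans (prod_le_mean_expn x x_ge0) (exprn_ile1 _ _ mean_x_le1).
by rewrite divr_ge0 ?ler0n //; apply: sumr_ge0.
Qed.

End Solutions.

Theorem theorem3 (R : rcfType) (n m : nat) (r : R)
  (b : 'I_m -> 'I_n -> R) :
  (1 <= n)%N -> (1 <= m)%N -> 0 < r ->
  (forall j i, 0 <= b j i) ->
  (forall j, exists i, b j i != 0) ->
  (forall u v : 'I_n -> R,
     solves_system r b u -> (forall j, 0 < dotv u (b j)) ->
     solves_system r b v -> (forall j, 0 < dotv v (b j)) ->
     u = v) /\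
  (forall u : 'I_n -> R,
     solves_system r b u -> (forall j, 0 < dotv u (b j)) ->
     dotv u u = r /\
     (forall v : 'I_n -> R, \sum_(i < n) v i ^+ 2 = r -> lhat b v <= lhat b u)).
Proof.
move=> _ m_gt0 r_gt0 b_ge0 _; split; first exact: solution_unique r_gt0.
move=> u u_sol u_pos; split; first exact: solution_dotvv m_gt0 u u_sol u_pos.
by move=> v; exact: solution_lhat_max m_gt0 r_gt0 u v b_ge0 u_sol u_pos.
Qed.
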